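(* For each $n\ge0$ there is an exact sequence of $k$-modules \[0\leftarrow k\xleftarrow{\varepsilon}k\bigl[\mathrm{Hom}_{\mathcal{IF}(as)}([n],[0])\bigr]\xleftarrow{\rho}k\bigl[\mathrm{Hom}_{\mathcal{IF}(as)}([n],[2])\bigr],\] where $\varepsilon(f)=1_k$ on generators and $\rho(g)=\mu_2\circ g-\nu\circ g$ on generators, both extended $k$-linearly.
   Context: Let $k$ be a commutative ring and $C_2=\{1,t\}$. The category $\mathcal{IF}(as)$ of involutive non-commutative sets: objects $[n]=\{0,\dots,n\}$, $n\ge0$; a morphism $f:[n]\to[m]$ is a map of sets together with a total order on each fibre $f^{-1}(i)$ and a $C_2$-label on each element of $[n]$ (so each fibre is a $C_2$-labelled ordered set). For a $C_2$-labelled ordered set $S$, $S^t$ denotes $S$ with the order reversed and all labels multiplied by $t$. The composite $g\circ f$ of $f:[n]\to[m]$ and $g:[m]\to[l]$ has the composite underlying map and, for $i\in[l]$ with $g^{-1}(i)=\{j_1<\dots<j_r\}$, fibre the concatenation $S_1<\dots<S_r$ where $S_s=f^{-1}(j_s)$ if $j_s$ has label $1$ and $S_s=f^{-1}(j_s)^t$ if $j_s$ has label $t$. For $n\ge0$, $\mu_n:[n]\to[0]$ is given by $\mu_n^{-1}(0)=\{0^1<1^1<\dots<n^1\}$ (superscripts are labels), and $\nu:[2]\to[0]$ is given by $\nu^{-1}(0)=\{2^1<1^t<0^1\}$. $k[S]$ denotes the free $k$-module on a set $S$. *)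

From mathcomp Require Import all_boot all_order all_algebra.
Set Implicit Arguments. Unset Strict Implicit. Unset Printing Implicit Defensive.
Import GRing.Theory.
Local Open Scope ring_scope.

(* [n] = {0,...,n} is 'I_n.+1.  C2 = {1,t} is encoded by bool: false = 1, true = t.
   A morphism [n] -> [m] of IF(as) is encoded by, for each x in [n], a triple
   (target f(x), C2-label of x, position of x in its fibre), where the positions
   in each fibre are pairwise distinct and smaller than the size of the fibre,
   i.e. they enumerate the fibre in its total order as 0,1,...,|fibre|-1.
   This encoding is a bijection with the morphisms of IF(as). *)
Definition is_mor (n m : nat) (d : {ffun 'I_n.+1 -> 'I_m.+1 * bool * 'I_n.+1}) : bool :=
  [forall x, forall y,
      ((d x).1.1 == (d y).1.1) && ((d x).2 == (d y).2) ==> (x == y)]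
  && [forall x, ((d x).2 < #|[pred y | (d y).1.1 == (d x).1.1]|)%N].

Definition IFHom (n m : nat) := {d : {ffun 'I_n.+1 -> 'I_m.+1 * bool * 'I_n.+1} | is_mor d}.

Section HomOps.
Variables n m l : nat.

Definition tgt (h : IFHom n m) (x : 'I_n.+1) : 'I_m.+1 := (val h x).1.1.
Definition lab (h : IFHom n m) (x : 'I_n.+1) : bool := (val h x).1.2.
Definition pos (h : IFHom n m) (x : 'I_n.+1) : 'I_n.+1 := (val h x).2.

Definition fibre (h : IFHom n m) (i : 'I_m.+1) : seq ('I_n.+1 * bool) :=
  [seq (x, lab h x) | x <- sort (fun x y => (pos h x <= pos h y)%N)
                                 [seq x <- enum 'I_n.+1 | tgt h x == i]].

(* a morphism is determined by the list of its labelled ordered fibres *)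
Definition fibres (h : IFHom n m) : seq (seq ('I_n.+1 * bool)) :=
  [seq fibre h i | i <- enum 'I_m.+1].

End HomOps.

(* S^t : reversed order, all labels multiplied by t *)
Definition twist (T : Type) (S : seq (T * bool)) : seq (T * bool) :=
  rev [seq (p.1, ~~ p.2) | p <- S].

Definition comp_fibres (n m l : nat) (g : IFHom m l) (f : IFHom n m)
  : seq (seq ('I_n.+1 * bool)) :=
  [seq flatten [seq (if jb.2 then twist (fibre f jb.1) else fibre f jb.1)
               | jb <- fibre g i]
  | i <- enum 'I_l.+1].

Definition mu_data (n : nat) : {ffun 'I_n.+1 -> 'I_1 * bool * 'I_n.+1} :=
  [ffun x => (ord0, false, x)].

Lemma mu_is_mor (n : nat) : is_mor (mu_data n).
Proof.
apply/andP; split.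
  apply/forallP => x; apply/forallP => y; by rewrite !ffunE /=; apply/implyP.
apply/forallP => x; rewrite !ffunE /=.
rewrite (@eq_card _ _ 'I_n.+1) ?card_ord ?ltn_ord //.
by move=> y; rewrite !inE ffunE.
Qed.

Definition mu (n : nat) : IFHom n 0 := exist _ (mu_data n) (mu_is_mor n).

(* nu : [2] -> [0], fibre 2^1 < 1^t < 0^1 *)
Definition nu_data : {ffun 'I_3 -> 'I_1 * bool * 'I_3} :=
  [ffun x => (ord0, nat_of_ord x == 1%N, rev_ord x)].

Lemma nu_is_mor : is_mor nu_data.
Proof.
apply/andP; split.
  apply/forallP => x; apply/forallP => y; rewrite !ffunE /=.
  by apply/implyP => /eqP /rev_ord_inj ->.
apply/forallP => x; rewrite !ffunE /=.
rewrite (@eq_card _ _ 'I_3) ?card_ord ?(ltn_ord (rev_ord x)) //.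
by move=> y; rewrite !inE ffunE.
Qed.

Definition nu : IFHom 2 0 := exist _ nu_data nu_is_mor.

(* Free k-module k[S] on a finite set S: {ffun S -> k} (coefficient functions). *)

(* generator of the morphism [n] -> [0] with prescribed fibres *)
Definition gen_of_fibres (k : pzRingType) (n : nat) (F : seq (seq ('I_n.+1 * bool)))
  : {ffun IFHom n 0 -> k} :=
  [ffun h => (fibres h == F)%:R].

Definition epsIF (k : comPzRingType) (n : nat) (c : {ffun IFHom n 0 -> k}) : k :=
  \sum_(h : IFHom n 0) c h.

Definition rhoIF (k : comPzRingType) (n : nat) (d : {ffun IFHom n 2 -> k})
  : {ffun IFHom n 0 -> k} :=
  [ffun h => \sum_(g : IFHom n 2)
      d g * (gen_of_fibres k (comp_fibres (mu 2) g) h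
             - gen_of_fibres k (comp_fibres nu g) h)].

(* A morphism [n] -> [0] of IF(as) is the same thing as a C2-labelled total
   order of [n], i.e. a word in which each element of [n] occurs exactly once,
   and mu_m \o g concatenates the fibres of g.  If g : [n] -> [2] has fibres
   A, B, C, then mu_2 \o g and nu \o g have the fibres ABC and C B^t A, and
   every triple of words partitioning [n] arises this way.  Hence
   epsilon \o rho = 0, and modulo the image of rho the generator of ABC equals
   that of C B^t A.  Taking B empty rotates a word; taking B a single letter
   flips one label or transposes two adjacent letters.  These moves connect any
   two words, so every difference of generators, hence all of ker epsilon, lies
   in the image of rho. *)

From mathcomp Require Import all_boot all_order all_algebra.
From mathcomp Require Import zify.
Set Implicit Arguments. Unset Strict Implicit. Unset Printing Implicit Defensive.
Import GRing.Theory.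

Lemma eq_from_index (T : eqType) (s1 s2 : seq T) :
  uniq s1 -> uniq s2 -> s1 =i s2 ->
  {in s1, forall x, index x s1 = index x s2} -> s1 = s2.
Proof.
move=> u1 u2 e1 idx; have sz : size s1 = size s2 by apply/perm_size/uniq_perm.
case: s1 u1 e1 idx sz => [|x0 s] u1 e1 idx sz; first by case: s2 {u2 e1 idx} sz.
apply: (eq_from_nth (x0 := x0) sz) => j lj.
have mj : nth x0 (x0 :: s) j \in x0 :: s by rewrite mem_nth.
by rewrite -{2}(index_uniq x0 lj u1) idx // nth_index // -e1.
Qed.

Section FlattenUniq.
Variables (I T : eqType) (r : seq I) (F : I -> seq T).
Hypothesis uniq_flat : uniq (flatten (map F r)).

Lemma uniq_flatten_block i : i \in r -> uniq (F i).
Proof.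
elim: r uniq_flat => [|a r' IH] //=; rewrite cat_uniq => /and3P [ua _ u].
by rewrite in_cons => /predU1P [-> | /IH]; last exact.
Qed.

Lemma uniq_flatten_block_inj i j x :
  i \in r -> j \in r -> x \in F i -> x \in F j -> i = j.
Proof.
elim: r uniq_flat => [|a r' IH] //=; rewrite cat_uniq => /and3P [_ disj u].
have in_rest l : l \in r' -> x \in F l -> x \in flatten (map F r').
  by move=> lr xl; apply/flattenP; exists (F l); rewrite ?map_f.
rewrite !in_cons => /predU1P [-> | ir] /predU1P [-> | jr] xi xj //; last exact: IH.
- by case/negP: disj; apply/hasP; exists x; rewrite ?(in_rest j).
- by case/negP: disj; apply/hasP; exists x; rewrite ?(in_rest i).
Qed.

End FlattenUniq.

Section Fibres.
Variables n m : nat.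
Implicit Types (h : IFHom n m) (x y : 'I_n.+1) (i : 'I_m.+1).

Definition fibre_elems h i : seq 'I_n.+1 :=
  sort (relpre (fun x => nat_of_ord (pos h x)) leq)
       [seq x <- enum 'I_n.+1 | tgt h x == i].

Lemma fibreE h i : fibre h i = [seq (x, lab h x) | x <- fibre_elems h i].
Proof. by []. Qed.

Lemma map_fst_fibre h i : map fst (fibre h i) = fibre_elems h i.
Proof. by rewrite fibreE -map_comp map_id. Qed.

Lemma mem_fibre_elems h i x : (x \in fibre_elems h i) = (tgt h x == i).
Proof. by rewrite mem_sort mem_filter mem_enum andbT. Qed.

Lemma uniq_fibre_elems h i : uniq (fibre_elems h i).
Proof. by rewrite sort_uniq filter_uniq // enum_uniq. Qed.

Lemma size_fibre_elems h i : size (fibre_elems h i) = #|[pred y | tgt h y == i]|.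
Proof.
rewrite -(card_uniqP (uniq_fibre_elems h i)).
by apply: eq_card => y; rewrite mem_fibre_elems.
Qed.

Lemma tgt_pos_inj h x y : tgt h x = tgt h y -> pos h x = pos h y -> x = y.
Proof.
rewrite /tgt /pos; case: h => d /= /andP [/forallP inj _] et ep.
by have /forallP /(_ y) := inj x; rewrite et ep !eqxx => /eqP.
Qed.

Lemma pos_lt_size h x : pos h x < size (fibre_elems h (tgt h x)).
Proof.
rewrite size_fibre_elems /pos /tgt.
by case: h => d /= /andP [_ /forallP /(_ x)].
Qed.

(* The positions in a fibre are a permutation of [0, size), so sorting the
   fibre by position lists the positions in increasing order. *)
Lemma map_pos_fibre_elems h i :
  [seq nat_of_ord (pos h x) | x <- fibre_elems h i] = iota 0 (size (fibre_elems h i)).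
Proof.
set P := [seq x <- enum 'I_n.+1 | tgt h x == i].
have sizeP : size (fibre_elems h i) = size P by rewrite size_sort.
have uniq_pos : uniq [seq nat_of_ord (pos h x) | x <- P].
  rewrite map_inj_in_uniq; first by rewrite filter_uniq // enum_uniq.
  move=> x y; rewrite !mem_filter => /andP [/eqP ex _] /andP [/eqP ey _] /val_inj.
  by apply: tgt_pos_inj; rewrite ex ey.
have sub_iota : {subset [seq nat_of_ord (pos h x) | x <- P] <= iota 0 (size P)}.
  move=> z /mapP [x]; rewrite mem_filter => /andP [/eqP ex _] ->.
  by rewrite mem_iota -sizeP -ex pos_lt_size.
have perm_iota : perm_eq [seq nat_of_ord (pos h x) | x <- P] (iota 0 (size P)).
  apply: uniq_perm; rewrite ?iota_uniq //.
  by case: (uniq_min_size uniq_pos sub_iota); rewrite ?size_iota ?size_map.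
rewrite /fibre_elems -sort_map sizeP -(sorted_sort leq_trans (iota_sorted 0 _)).
by apply/perm_sortP => //; [exact: leq_total | exact: leq_trans | exact: anti_leq].
Qed.

Lemma index_fibre_elems h x : index x (fibre_elems h (tgt h x)) = pos h x.
Proof.
have mx : x \in fibre_elems h (tgt h x) by rewrite mem_fibre_elems.
have := congr1 (nth 0%N ^~ (index x (fibre_elems h (tgt h x))))
               (map_pos_fibre_elems h (tgt h x)).
by rewrite (nth_map x) ?index_mem // nth_index // nth_iota ?index_mem.
Qed.

Lemma fibre_elemsE h i s :
  uniq s -> (forall x, (x \in s) = (tgt h x == i)) ->
  {in s, forall x, index x s = pos h x} -> fibre_elems h i = s.
Proof.
move=> us mem_s idx_s; apply: eq_from_index; rewrite ?uniq_fibre_elems //.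
  by move=> x; rewrite mem_fibre_elems mem_s.
move=> x; rewrite mem_fibre_elems => /eqP ex.
by rewrite -ex index_fibre_elems idx_s // mem_s ex.
Qed.

Lemma lab_nth h x :
  lab h x = nth false (map snd (fibre h (tgt h x))) (pos h x).
Proof.
have mx : x \in fibre_elems h (tgt h x) by rewrite mem_fibre_elems.
by rewrite fibreE -map_comp -index_fibre_elems (nth_map x) ?nth_index ?index_mem.
Qed.

Lemma fibre_inj h h' : (forall i, fibre h i = fibre h' i) -> h = h'.
Proof.
move=> eqF; have eqE i : fibre_elems h i = fibre_elems h' i.
  by rewrite -!map_fst_fibre eqF.
have eqT x : tgt h' x = tgt h x.
  by apply/eqP; rewrite -mem_fibre_elems -eqE mem_fibre_elems.
have eqPos x : pos h' x = pos h x.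
  by apply/val_inj; rewrite /= -!index_fibre_elems eqT eqE.
apply/val_inj/ffunP => x.
have valE (g : IFHom n m) : val g x = (tgt g x, lab g x, pos g x).
  by rewrite /tgt /lab /pos; case: (val g x) => [[]].
by rewrite !valE !lab_nth eqT eqPos eqF.
Qed.

End Fibres.

Definition arrangement (T : eqType) (s : seq T) (w : seq (T * bool)) :=
  perm_eq (map fst w) s.

Lemma arrangement_perm (T : eqType) (s : seq T) (w w' : seq (T * bool)) :
  perm_eq (map fst w) (map fst w') -> arrangement s w' -> arrangement s w.
Proof. exact: perm_trans. Qed.

Lemma pairs_by_fst (S T : eqType) (w : seq (S * T)) t0 : uniq (map fst w) ->
  w = [seq (x, nth t0 (map snd w) (index x (map fst w))) | x <- map fst w].
Proof.
case: w => [|p0 w'] // uw.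
apply: (eq_from_nth (x0 := p0)); first by rewrite !size_map.
move=> j lj.
rewrite (nth_map p0.1) ?size_map // index_uniq ?size_map //.
by rewrite !(nth_map p0) //; case: (nth p0 _ j).
Qed.

Section MorOfFibres.
Variables (n m : nat) (W : 'I_m.+1 -> seq ('I_n.+1 * bool)).
Hypothesis arrW : arrangement (enum 'I_n.+1) (flatten (map W (enum 'I_m.+1))).

Let E i := map fst (W i).

Let uniq_flatten_E : uniq (flatten (map E (enum 'I_m.+1))).
Proof. by rewrite map_comp -map_flatten (perm_uniq arrW) enum_uniq. Qed.

Let uniq_E i : uniq (E i).
Proof. by apply: (uniq_flatten_block uniq_flatten_E); rewrite mem_enum. Qed.

Let tg x := odflt ord0 [pick i | x \in E i].

Let mem_tg x : x \in E (tg x).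
Proof.
rewrite /tg; case: pickP => [i //| noE].
have : x \in flatten (map E (enum 'I_m.+1)).
  by rewrite map_comp -map_flatten (perm_mem arrW) mem_enum.
by case/flattenP => _ /mapP [i _ ->]; rewrite noE.
Qed.

Let tg_eq x i : x \in E i -> tg x = i.
Proof. by apply: (uniq_flatten_block_inj uniq_flatten_E); rewrite ?mem_enum. Qed.

Let index_lt x : (index x (E (tg x)) < n.+1)%N.
Proof.
apply: leq_trans (_ : size (E (tg x)) <= n.+1)%N; first by rewrite index_mem.
by rewrite -(card_uniqP (uniq_E _)) (leq_trans (max_card _)) ?card_ord.
Qed.

Let data := [ffun x => (tg x, nth false (map snd (W (tg x))) (index x (E (tg x))),
                        inord (index x (E (tg x))) : 'I_n.+1)].

Let data_is_mor : is_mor data.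
Proof.
apply/andP; split.
  apply/forallP => x; apply/forallP => y; apply/implyP; rewrite !ffunE /=.
  case/andP => /eqP tgxy /eqP /(congr1 val); rewrite /= !inordK // => ixy.
  by rewrite -(nth_index x (mem_tg x)) ixy tgxy nth_index ?mem_tg.
apply/forallP => x; rewrite !ffunE /= inordK //.
have -> : #|[pred y | (data y).1.1 == tg x]| = #|E (tg x)|.
  by apply: eq_card => y; rewrite !inE ffunE /=; apply/eqP/idP => [<- | /tg_eq].
by rewrite (card_uniqP (uniq_E _)) index_mem.
Qed.

Definition mor_of_fibres : IFHom n m := exist _ data data_is_mor.

Lemma fibre_mor_of_fibres i : fibre mor_of_fibres i = W i.
Proof.
have elemsE : fibre_elems mor_of_fibres i = E i.
  apply: fibre_elemsE => [|x|x xE]; rewrite ?uniq_E //.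
    by rewrite /tgt ffunE; apply/idP/eqP => [/tg_eq | <-].
  by rewrite /pos ffunE /= inordK // (tg_eq xE).
rewrite fibreE elemsE [RHS](pairs_by_fst false (uniq_E i)).
by apply/eq_in_map => x xE; rewrite /lab ffunE /= (tg_eq xE).
Qed.

End MorOfFibres.

Lemma perm_flatten_fibres n m (h : IFHom n m) :
  arrangement (enum 'I_n.+1) (flatten (fibres h)).
Proof.
rewrite /arrangement map_flatten -map_comp (eq_map (map_fst_fibre h)).
apply: uniq_perm; rewrite ?enum_uniq //; last first.
  move=> x; rewrite mem_enum; apply/flattenP; exists (fibre_elems h (tgt h x)).
    by rewrite map_f ?mem_enum.
  by rewrite mem_fibre_elems.
elim: (enum 'I_m.+1) (enum_uniq 'I_m.+1) => [|i r IH] //= /andP [ir ur].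
rewrite cat_uniq uniq_fibre_elems IH // andbT /=.
apply/hasP => -[x /flattenP [_ /mapP [j jr ->]]].
by rewrite !mem_fibre_elems => /eqP -> /eqP ei; move: ir; rewrite -ei jr.
Qed.

Lemma enum_ord1 : enum 'I_1 = [:: ord0].
Proof. by apply: (inj_map val_inj); rewrite val_enum_ord. Qed.

Section MorToPoint.
Variable n : nat.
Implicit Types (h : IFHom n 0) (w : seq ('I_n.+1 * bool)).

Lemma fibres0 h : fibres h = [:: fibre h ord0].
Proof. by rewrite /fibres enum_ord1. Qed.

Lemma arrangement_fibre0 h : arrangement (enum 'I_n.+1) (fibre h ord0).
Proof. by have := perm_flatten_fibres h; rewrite fibres0 /= cats0. Qed.

(* [mu n] is a junk value, reached only when [w] is not an arrangement. *)
Definition mor_of_word w : IFHom n 0 :=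
  odflt (mu n) [pick h | fibre h ord0 == w].

Lemma fibre_mor_of_word w :
  arrangement (enum 'I_n.+1) w -> fibre (mor_of_word w) ord0 = w.
Proof.
move=> arr_w.
have arrW : arrangement (enum 'I_n.+1) (flatten (map (fun=> w) (enum 'I_1))).
  by rewrite enum_ord1 /= cats0.
rewrite /mor_of_word; case: pickP => [h /eqP // | none].
by have := none (mor_of_fibres arrW); rewrite fibre_mor_of_fibres eqxx.
Qed.

Lemma mor_of_wordK h : mor_of_word (fibre h ord0) = h.
Proof.
apply: fibre_inj => i; rewrite (ord1 i).
by rewrite fibre_mor_of_word ?arrangement_fibre0.
Qed.

Lemma fibre_mu : fibre (mu n) ord0 = [seq (x, false) | x <- enum 'I_n.+1].
Proof.
rewrite fibreE (@fibre_elemsE _ _ _ _ (enum 'I_n.+1)) ?enum_uniq //.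
- by apply/eq_map => x; rewrite /lab ffunE.
- by move=> x; rewrite mem_enum /tgt ffunE.
- by move=> x _; rewrite index_enum_ord /pos ffunE.
Qed.

End MorToPoint.

Lemma comp_fibres_mu n m (g : IFHom n m) :
  comp_fibres (mu m) g = [:: flatten (fibres g)].
Proof. by rewrite /comp_fibres enum_ord1 /= fibre_mu -map_comp. Qed.

Local Notation o0 := (@Ordinal 3 0 isT).
Local Notation o1 := (@Ordinal 3 1 isT).
Local Notation o2 := (@Ordinal 3 2 isT).

Lemma enum_ord3 : enum 'I_3 = [:: o0; o1; o2].
Proof. by apply: (inj_map val_inj); rewrite val_enum_ord. Qed.

Lemma ord3_ind (P : 'I_3 -> Prop) : P o0 -> P o1 -> P o2 -> forall x, P x.
Proof.
move=> P0 P1 P2 x; have : x \in enum 'I_3 by rewrite mem_enum.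
by rewrite enum_ord3 !inE => /or3P [] /eqP ->.
Qed.

Lemma fibre_nu : fibre nu ord0 = [:: (o2, false); (o1, true); (o0, false)].
Proof.
rewrite fibreE (@fibre_elemsE _ _ _ _ [:: o2; o1; o0]) //.
- by rewrite /= /lab !ffunE.
- by apply: ord3_ind; rewrite /tgt ffunE.
- by apply: ord3_ind; rewrite /pos ffunE.
Qed.

Lemma flatten_fibres3 n (g : IFHom n 2) :
  flatten (fibres g) = fibre g o0 ++ fibre g o1 ++ fibre g o2.
Proof. by rewrite /fibres enum_ord3 /= cats0. Qed.

Lemma comp_fibres_nu n (g : IFHom n 2) :
  comp_fibres nu g = [:: fibre g o2 ++ twist (fibre g o1) ++ fibre g o0].
Proof. by rewrite /comp_fibres enum_ord1 /= fibre_nu /= cats0. Qed.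

Lemma map_fst_twist (T : Type) (B : seq (T * bool)) :
  map fst (twist B) = rev (map fst B).
Proof. by rewrite /twist map_rev -map_comp. Qed.

Ltac perm_fst :=
  apply/permP => ?; rewrite /= ?map_cat ?map_fst_twist /= ?count_cat ?count_rev /=; lia.

Section WordMoves.
Variables (T : eqType) (s : seq T).
Local Notation word := (seq (T * bool)).
Variable R : word -> word -> Prop.
Hypotheses (R_refl : forall w, R w w)
           (R_trans : forall w1 w2 w3, R w1 w2 -> R w2 w3 -> R w1 w3).
Hypothesis R_turn : forall A B C : word,
  arrangement s (A ++ B ++ C) -> R (A ++ B ++ C) (C ++ twist B ++ A).

Lemma turn_rot (A C : word) : arrangement s (A ++ C) -> R (A ++ C) (C ++ A).
Proof. exact: (R_turn (B := [::])). Qed.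

Lemma turn_flip_head p (L : word) :
  arrangement s (p :: L) -> R (p :: L) ((p.1, ~~ p.2) :: L).
Proof.
move=> arr; apply: (R_trans (R_turn (A := [::]) (B := [:: p]) arr)).
by apply: (turn_rot (A := L) (C := [:: _])); apply: arrangement_perm arr; perm_fst.
Qed.

Lemma turn_swap_head a b (C : word) :
  arrangement s (a :: b :: C) -> R (a :: b :: C) (b :: a :: C).
Proof.
move=> arr; apply: (R_trans (R_turn (A := [:: a]) (B := [:: b]) arr)).
apply: (R_trans (turn_rot (A := C) (C := [:: (b.1, ~~ b.2); a]) _)).
  by apply: arrangement_perm arr; perm_fst.
have := turn_flip_head (p := (b.1, ~~ b.2)) (L := a :: C).
rewrite /= negbK -surjective_pairing.
by apply; apply: arrangement_perm arr; perm_fst.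
Qed.

Lemma turn_in_context (u v : word) :
  perm_eq (map fst u) (map fst v) ->
  (forall C, arrangement s (u ++ C) -> R (u ++ C) (v ++ C)) ->
  forall X Y, arrangement s (X ++ u ++ Y) -> R (X ++ u ++ Y) (X ++ v ++ Y).
Proof.
move=> uv R_uv X Y arr.
have arr_u : arrangement s (u ++ Y ++ X) by apply: arrangement_perm arr; perm_fst.
have arr_v : arrangement s (v ++ Y ++ X).
  by apply: arrangement_perm arr_u; rewrite !map_cat perm_cat2r perm_sym.
apply: (R_trans (turn_rot arr)); rewrite -catA.
apply: (R_trans (R_uv _ arr_u)); rewrite catA.
by apply: turn_rot; rewrite -catA.
Qed.

Lemma turn_relabel (X Y : word) p b :
  arrangement s (X ++ p :: Y) -> R (X ++ p :: Y) (X ++ (p.1, b) :: Y).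
Proof.
have [<- | /negPf nb] := eqVneq p.2 b.
  by rewrite -surjective_pairing => _; apply: R_refl.
have -> : b = ~~ p.2 by case: b nb; case: (p.2).
exact: (turn_in_context (u := [:: p]) (v := [:: _]) _ (@turn_flip_head p)).
Qed.

Lemma turn_move (X Y1 Y2 : word) q :
  arrangement s (X ++ q :: Y1 ++ Y2) -> R (X ++ q :: Y1 ++ Y2) (X ++ Y1 ++ q :: Y2).
Proof.
elim: Y1 X => [|y Y1 IH] X arr; first exact: R_refl.
have swap_qy := turn_in_context (u := [:: q; y]) (v := [:: y; q]) _ (@turn_swap_head q y).
apply: (R_trans (swap_qy _ _ _ arr)); first by perm_fst.
have := IH (X ++ [:: y]); rewrite -!catA; apply.
by apply: arrangement_perm arr; perm_fst.
Qed.

(* Insertion sort: give the head p of L the label of its occurrence q in L',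
   rearrange the rest of L recursively, then move q into its place. *)
Lemma turn_perm_suffix (L : word) : forall X L',
  arrangement s (X ++ L) -> perm_eq (map fst L) (map fst L') -> R (X ++ L) (X ++ L').
Proof.
elim: L => [|p L IH] X L' arr pL.
  by case: L' pL => [_ | ? ? /perm_size //]; apply: R_refl.
have : p.1 \in map fst L' by rewrite -(perm_mem pL) mem_head.
case/mapP=> q qL' eq_pq; case/splitPr: qL' pL => Y1 Y2 pL.
have pL12 : perm_eq (map fst L) (map fst (Y1 ++ Y2)).
  by rewrite -(perm_cons p.1) (perm_trans pL) // eq_pq; perm_fst.
apply: (R_trans (turn_relabel q.2 arr)); rewrite eq_pq -surjective_pairing.
have arr_q : arrangement s (X ++ q :: L).
  by apply: arrangement_perm arr; rewrite !map_cat /= eq_pq.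
apply: (R_trans (w2 := X ++ q :: Y1 ++ Y2)).
  by have := IH (X ++ [:: q]) (Y1 ++ Y2); rewrite -!catA; apply.
apply: turn_move; apply: arrangement_perm arr_q.
by rewrite !map_cat /= perm_cat2l perm_cons perm_sym.
Qed.

Lemma turn_arrangements (w w' : word) : arrangement s w -> arrangement s w' -> R w w'.
Proof.
move=> arr arr'; apply: (turn_perm_suffix (X := [::])) => //.
by rewrite (perm_trans arr) // perm_sym.
Qed.

End WordMoves.

Local Open Scope ring_scope.

Section FreeModule.
Variable k : comPzRingType.

Definition delta (T : finType) (t : T) : {ffun T -> k} := [ffun x => (x == t)%:R].

Lemma ffun_sum0_decomp (T : finType) (f : {ffun T -> k}) t0 :
  \sum_t f t = 0 -> f = \sum_t [ffun x => f t * (delta t - delta t0) x].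
Proof.
move=> f0; apply/ffunP => x; rewrite sum_ffunE.
under eq_bigr do rewrite !ffunE mulrBr.
rewrite sumrB -mulr_suml f0 mul0r subr0 (bigD1 x) //= eqxx mulr1.
by rewrite big1 ?addr0 // => t /negPf; rewrite eq_sym => ->; rewrite mulr0.
Qed.

Variable n : nat.
Local Notation word := (seq ('I_n.+1 * bool)).
Implicit Types (w : word) (c : {ffun IFHom n 0 -> k}) (d : {ffun IFHom n 2 -> k}).

Lemma epsIF_delta (h : IFHom n 0) : epsIF (delta h) = 1.
Proof.
rewrite /epsIF (bigD1 h) //= ffunE eqxx big1 ?addr0 // => h' /negPf.
by rewrite ffunE => ->.
Qed.

Lemma gen_of_fibres_word w : arrangement (enum 'I_n.+1) w ->
  gen_of_fibres k [:: w] = delta (mor_of_word w).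
Proof.
move=> arr_w; apply/ffunP => h; rewrite !ffunE fibres0 eqseq_cons andbT.
suff -> : (fibre h ord0 == w) = (h == mor_of_word w) by [].
by apply/eqP/eqP => [<- | ->]; rewrite ?mor_of_wordK ?fibre_mor_of_word.
Qed.

Definition im_rho c := exists d, rhoIF d = c.

Lemma im_rhoD c1 c2 : im_rho c1 -> im_rho c2 -> im_rho (c1 + c2).
Proof.
case=> d1 <- [d2 <-]; exists (d1 + d2); apply/ffunP => h.
by rewrite !ffunE -big_split; apply: eq_bigr => g _; rewrite ffunE mulrDl.
Qed.

Lemma im_rhoMl a c : im_rho c -> im_rho [ffun h => a * c h].
Proof.
case=> d <-; exists [ffun g => a * d g]; apply/ffunP => h.
by rewrite !ffunE mulr_sumr; apply: eq_bigr => g _; rewrite ffunE mulrA.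
Qed.

Lemma im_rho0 : im_rho 0.
Proof.
by exists 0; apply/ffunP => h; rewrite !ffunE big1 // => g _; rewrite ffunE mul0r.
Qed.

Lemma arrangement_fibres3 (g : IFHom n 2) :
  arrangement (enum 'I_n.+1) (fibre g o0 ++ fibre g o1 ++ fibre g o2).
Proof. by rewrite -flatten_fibres3 perm_flatten_fibres. Qed.

Lemma rhoIF_delta (g : IFHom n 2) :
  rhoIF (delta g) =
    delta (mor_of_word (fibre g o0 ++ fibre g o1 ++ fibre g o2))
  - delta (mor_of_word (fibre g o2 ++ twist (fibre g o1) ++ fibre g o0)).
Proof.
have arr := arrangement_fibres3 g.
have arr' : arrangement (enum 'I_n.+1) (fibre g o2 ++ twist (fibre g o1) ++ fibre g o0).
  by apply: arrangement_perm arr; perm_fst.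
apply/ffunP => h; rewrite !ffunE (bigD1 g) //= big1 => [|g' /negPf g'g]; last first.
  by rewrite ffunE g'g mul0r.
rewrite ffunE eqxx mul1r addr0 comp_fibres_mu comp_fibres_nu flatten_fibres3.
by rewrite !gen_of_fibres_word // !ffunE.
Qed.

Lemma epsIF_rhoIF d : epsIF (rhoIF d) = 0.
Proof.
have eps_word w : arrangement (enum 'I_n.+1) w ->
    \sum_(h : IFHom n 0) gen_of_fibres k [:: w] h = 1.
  by move=> arr_w; rewrite gen_of_fibres_word // -[RHS](epsIF_delta (mor_of_word w)).
rewrite /epsIF; under eq_bigr do rewrite ffunE.
rewrite exchange_big big1 // => g _; rewrite -mulr_sumr sumrB.
rewrite comp_fibres_mu comp_fibres_nu flatten_fibres3.
rewrite !eps_word ?subrr ?mulr0 ?arrangement_fibres3 //.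
by apply: arrangement_perm (arrangement_fibres3 g); perm_fst.
Qed.

Definition rho_cong w w' := im_rho (delta (mor_of_word w) - delta (mor_of_word w')).

Lemma rho_cong_refl w : rho_cong w w.
Proof. by rewrite /rho_cong subrr; apply: im_rho0. Qed.

Lemma rho_cong_trans w1 w2 w3 : rho_cong w1 w2 -> rho_cong w2 w3 -> rho_cong w1 w3.
Proof. by move=> r12 r23; have := im_rhoD r12 r23; rewrite addrA subrK. Qed.

Lemma rho_cong_turn A B C : arrangement (enum 'I_n.+1) (A ++ B ++ C) ->
  rho_cong (A ++ B ++ C) (C ++ twist B ++ A).
Proof.
move=> arr; pose W (i : 'I_3) := nth [::] [:: A; B; C] i.
have arrW : arrangement (enum 'I_n.+1) (flatten (map W (enum 'I_3))).
  by rewrite enum_ord3 /= cats0.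
by exists (delta (mor_of_fibres arrW)); rewrite rhoIF_delta !fibre_mor_of_fibres.
Qed.

Lemma im_rho_delta_sub (h h' : IFHom n 0) : im_rho (delta h - delta h').
Proof.
rewrite -(mor_of_wordK h) -(mor_of_wordK h').
apply: (turn_arrangements rho_cong_refl rho_cong_trans rho_cong_turn);
  exact: arrangement_fibre0.
Qed.

End FreeModule.

Theorem lemma5p3 (k : comPzRingType) (n : nat) :
  (forall a : k, exists c : {ffun IFHom n 0 -> k}, epsIF c = a) /\
  (forall c : {ffun IFHom n 0 -> k},
      epsIF c = 0 <-> exists d : {ffun IFHom n 2 -> k}, rhoIF d = c).
Proof.
split=> [a | c].
  exists [ffun h => a * delta k (mu n) h].
  rewrite -[RHS]mulr1 -(epsIF_delta k (mu n)) /epsIF mulr_sumr.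
  by apply: eq_bigr => h _; rewrite ffunE.
split=> [eps_c | [d <-]]; last exact: epsIF_rhoIF.
rewrite (ffun_sum0_decomp (mu n) eps_c).
apply: (big_ind (@im_rho k n)) => [|c1 c2|h _]; [exact: im_rho0 | exact: im_rhoD |].
exact/im_rhoMl/im_rho_delta_sub.
Qed.
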